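(* Let $G=(V,E)$ be a directed graph on $n$ nodes in which every node has a self-loop, let $P$ be an $n\times n$ right stochastic matrix supported on the edges of $G$, let $D$ be diagonal with entries $D_{uu}=p_{uu'}\in[0,1]$, and let $\tilde P=(\mathbf I_n-D)P$. Write $p^{(t)}_{uv}=(P^t)_{uv}$ and $\tilde p^{(t)}_{uv}=(\tilde P^t)_{uv}$. Then for all $u,v\in V$ and every integer $t\ge 1$, $$(1-p_{uu'})\Big(\max_{w\in V}(1-p_{ww'})\Big)^{t-1}p^{(t)}_{uv}\;\ge\;\tilde p^{(t)}_{uv}\;\ge\;(1-p_{uu'})\Big(\min_{w\in V}(1-p_{ww'})\Big)^{t-1}p^{(t)}_{uv}.$$
   Context: $p_{uu'}$ is interpreted as the probability that a random walker at $u$ is absorbed (moves to an auxiliary absorbing node $u'$); $\tilde p^{(t)}_{uv}$ is the probability that a walker started at $u$ is at $v$ (not yet absorbed) after $t$ steps. *)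

From HB Require Import structures.
From mathcomp Require Import all_boot all_order all_algebra.
Set Implicit Arguments. Unset Strict Implicit. Unset Printing Implicit Defensive.
Import Order.TTheory GRing.Theory Num.Theory.
Local Open Scope ring_scope.

Definition has_self_loops n (e : rel 'I_n) : Prop := forall u, e u u.

Definition right_stochastic (R : numDomainType) n (P : 'M[R]_n) : Prop :=
  (forall u v, 0 <= P u v) /\ (forall u, \sum_(v < n) P u v = 1).

Definition supported_on (R : numDomainType) n (e : rel 'I_n) (P : 'M[R]_n) : Prop :=
  forall u v, P u v != 0 -> e u v.

(* D = diag(d), with d u = p_{uu'} *)
Definition absorb_diag (R : numDomainType) n (d : 'I_n -> R) : 'M[R]_n :=
  diag_mx (\row_u d u).

Definition Ptilde (R : numDomainType) n (d : 'I_n -> R) (P : 'M[R]_n) : 'M[R]_n :=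
  (1%:M - absorb_diag d) *m P.

(* max / min over w of (1 - d w); values lie in [0,1], so the neutral
   elements 0 and 1 do not affect the result when n > 0. *)
Definition max_stay (R : realDomainType) n (d : 'I_n -> R) : R :=
  \big[Num.max/0]_(w < n) (1 - d w).
Definition min_stay (R : realDomainType) n (d : 'I_n -> R) : R :=
  \big[Num.min/1]_(w < n) (1 - d w).

From HB Require Import structures.
From mathcomp Require Import all_boot all_order all_algebra.
Import Order.TTheory GRing.Theory Num.Theory.
Local Open Scope ring_scope.

(* Row u of Ptilde is row u of P scaled by 1 - d u, so Ptilde is squeezed
   entrywise between (min_stay d) *: P and (max_stay d) *: P.  Products of
   nonnegative matrices are monotone in each factor, hence Ptilde ^+ k lies
   between (min_stay d) ^+ k *: P ^+ k and (max_stay d) ^+ k *: P ^+ k; the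
   first step of a walk from u is scaled by exactly 1 - d u. *)

Lemma scalemx_exp (R : comPzSemiRingType) n (a : R) (A : 'M[R]_n) k :
  (a *: A) ^+ k = a ^+ k *: A ^+ k.
Proof.
elim: k => [|k IHk]; first by rewrite !expr0 scale1r.
by rewrite !exprS IHk -!mulmxE -scalemxAl -scalemxAr scalerA.
Qed.

Section NonnegMatrix.

Variables (R : numDomainType) (n : nat).

Lemma mulmx_le_nonneg (A B C D : 'M[R]_n) :
  (forall i j, 0 <= A i j <= B i j) -> (forall i j, 0 <= C i j <= D i j) ->
  forall i j, (A *m C) i j <= (B *m D) i j.
Proof.
move=> AB CD i j; rewrite !mxE; apply: ler_sum => k _.
by case/andP: (AB i k) => A0 AB'; case/andP: (CD k j) => C0 CD'; apply: ler_pM.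
Qed.

Lemma mxexp_ge0 (A : 'M[R]_n) :
  (forall i j, 0 <= A i j) -> forall k i j, 0 <= (A ^+ k) i j.
Proof.
move=> A0; elim=> [|k IHk] i j; first by rewrite expr0 mxE ler0n.
by rewrite exprS -mulmxE mxE; apply: sumr_ge0 => l _; rewrite mulr_ge0.
Qed.

Lemma mxexp_le_nonneg (A B : 'M[R]_n) :
  (forall i j, 0 <= A i j <= B i j) ->
  forall k i j, 0 <= (A ^+ k) i j <= (B ^+ k) i j.
Proof.
move=> AB k i j; have A0 i' j' : 0 <= A i' j' by case/andP: (AB i' j').
rewrite mxexp_ge0 //=; elim: k i j => [|k IHk] i j; first by rewrite !expr0.
by rewrite !exprS -!mulmxE; apply: mulmx_le_nonneg => // l m; rewrite mxexp_ge0 ?IHk.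
Qed.

End NonnegMatrix.

Section AbsorbedWalk.

Variables (R : realDomainType) (n : nat) (d : 'I_n -> R) (P : 'M[R]_n).
Hypothesis P_ge0 : forall u v, 0 <= P u v.
Hypothesis d_01 : forall u, 0 <= d u <= 1.

Lemma stay_ge0 w : 0 <= 1 - d w.
Proof. by rewrite subr_ge0; case/andP: (d_01 w). Qed.

Lemma Ptilde_exprS k u v :
  (Ptilde d P ^+ k.+1) u v = (1 - d u) * (P *m Ptilde d P ^+ k) u v.
Proof.
rewrite exprS -mulmxE /Ptilde -mulmxA mulmxBl mul1mx /absorb_diag mul_diag_mx.
by rewrite !mxE mulrBl mul1r.
Qed.

Lemma Ptilde_entry u v : Ptilde d P u v = (1 - d u) * P u v.
Proof. by rewrite -[Ptilde d P]expr1 Ptilde_exprS expr0 mulmx1. Qed.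

Lemma max_stay_ge w : 1 - d w <= max_stay d.
Proof. by rewrite /max_stay (bigD1 w) //= le_max lexx. Qed.

Lemma min_stay_le w : min_stay d <= 1 - d w.
Proof. by rewrite /min_stay (bigD1 w) //= ge_min lexx. Qed.

Lemma min_stay_ge0 : 0 <= min_stay d.
Proof.
by rewrite /min_stay; elim/big_rec: _ => // w x _ x0; rewrite le_min x0 stay_ge0.
Qed.

Lemma Ptilde_le_max_stay u v : 0 <= Ptilde d P u v <= (max_stay d *: P) u v.
Proof.
rewrite Ptilde_entry mxE mulr_ge0 ?stay_ge0 //=.
by rewrite ler_wpM2r ?max_stay_ge.
Qed.

Lemma min_stay_le_Ptilde u v : 0 <= (min_stay d *: P) u v <= Ptilde d P u v.
Proof.
rewrite Ptilde_entry mxE mulr_ge0 ?min_stay_ge0 //=.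
by rewrite ler_wpM2r ?min_stay_le.
Qed.

Lemma scaled_walk_entry (a : R) k u v :
  a ^+ k * (P ^+ k.+1) u v = (P *m (a *: P) ^+ k) u v.
Proof. by rewrite scalemx_exp -scalemxAr exprS -mulmxE [RHS]mxE. Qed.

End AbsorbedWalk.

Theorem lemma2 (R : realFieldType) (n : nat) (e : rel 'I_n) (P : 'M[R]_n)
  (d : 'I_n -> R)
  (he : has_self_loops e) (hP : right_stochastic P) (hsupp : supported_on e P)
  (hd : forall u, 0 <= d u <= 1)
  (u v : 'I_n) (t : nat) (ht : (1 <= t)%N) :
  (1 - d u) * (max_stay d) ^+ t.-1 * (P ^+ t) u v >= (Ptilde d P ^+ t) u v /\
  (Ptilde d P ^+ t) u v >= (1 - d u) * (min_stay d) ^+ t.-1 * (P ^+ t) u v.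
Proof.
case: hP => P_ge0 _; case: t ht => // k _ /=.
have PP i j : 0 <= P i j <= P i j by rewrite P_ge0 lexx.
rewrite Ptilde_exprS -!mulrA !scaled_walk_entry.
split; apply: ler_wpM2l; rewrite ?stay_ge0 //; apply: mulmx_le_nonneg => //;
  apply: mxexp_le_nonneg.
- exact: Ptilde_le_max_stay.
- exact: min_stay_le_Ptilde.
Qed.
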